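(* Let $\mathbb{B}$ be a bouquet that has a certificate of pseudo-orientability. Then every bouquet that is a partial dual of $\mathbb{B}$ also has a certificate of pseudo-orientability.
   Context: A ribbon graph is a surface with boundary written as a union of vertex discs and edge discs meeting in disjoint line segments, each on the boundary of exactly one vertex and one edge, each edge containing exactly two such segments (its ends). A bouquet is a ribbon graph with one vertex $v$; its edges are loops; a loop $e$ is orientable if $v\cup e$ is an annulus, non-orientable if it is a Möbius band. A certificate of pseudo-orientability of a bouquet is a pair $(S_1,S_2)$ of closed arcs covering the boundary circle of $v$ and meeting in exactly two points, such that both ends of each orientable loop lie in the interior of one $S_i$ and each non-orientable loop has one end in the interior of $S_1$ and the other in the interior of $S_2$. For $X\subseteq E(\mathbb{B})$, the partial dual $\mathbb{B}^X$ has the same edges and, as vertices, discs glued along each boundary component of the spanning ribbon subgraph $(V(\mathbb{B}),X)$, the old vertex discarded. *)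

From mathcomp Require Import all_boot.
Set Implicit Arguments. Unset Strict Implicit. Unset Printing Implicit Defensive.

(* Flags F: for each edge e (a rectangle) the 4 corner points of its two
   attaching segments (ends).  For a flag x:
   - eps x : the other endpoint of the same end segment of the same edge;
   - sig x : the endpoint at the other end of the same long side of the edge;
   - nu  x : the next flag along the vertex boundary, across the vertex arc
             that is not covered by an edge end;
   - edg x : the edge the flag belongs to. *)
Record rdata (F E : finType) := RData {
  eps : F -> F; sig : F -> F; nu : F -> F; edg : F -> E }.

Definition fpf_involution (F : finType) (f : F -> F) :=
  forall x, f (f x) = x /\ f x <> x.

Definition is_ribbon_graph (F E : finType) (G : rdata F E) :=
  [/\ fpf_involution (eps G), fpf_involution (sig G), fpf_involution (nu G),
      (forall x, eps G (sig G x) = sig G (eps G x) /\ eps G x <> sig G x)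
    & (forall x y, edg G x = edg G y <->
                   y \in [:: x; eps G x; sig G x; eps G (sig G x)])]
  /\ (forall e, exists x, edg G x = e).

(* vertices = orbits of <eps, nu>; a bouquet has exactly one vertex *)
Definition vrel (F E : finType) (G : rdata F E) : rel F :=
  fun x y => (y == eps G x) || (y == nu G x).

Definition bouquet (F E : finType) (G : rdata F E) :=
  (exists x : F, True) /\ forall x y : F, connect (vrel G) x y.

(* the loop e is orientable iff the surface v ∪ e is orientable
   (i.e. an annulus rather than a Moebius band): its flag graph
   (eps, nu, and sig restricted to the flags of e) is bipartite. *)
Definition orientable_loop (F E : finType) (G : rdata F E) (e : E) :=
  exists s : F -> bool, forall x,
    [/\ s (eps G x) = ~~ s x, s (nu G x) = ~~ s x
      & edg G x = e -> s (sig G x) = ~~ s x].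

(* certificate of pseudo-orientability: c x says whether the point x of the
   vertex boundary lies in S1 (true) or S2 (false).  Each end lies in the
   interior of one arc (c constant on end segments); the two cut points lie
   in vertex arcs, so at most two vertex arcs {x, nu x} change colour
   (i.e. at most 4 flags x with c x != c (nu x)); orientable loops have both
   ends in the same arc, non-orientable ones in different arcs. *)
Definition has_certificate (F E : finType) (G : rdata F E) :=
  exists c : F -> bool,
    [/\ (forall x, c (eps G x) = c x),
        #|[set x | c x != c (nu G x)]| <= 4
      & (forall x, c (sig G x) = c x <-> orientable_loop G (edg G x))].

(* partial dual w.r.t. a set X of edges: on flags of edges of X the roles
   of ends and sides are exchanged; vertex arcs (nu) are unchanged. *)
Definition pdual (F E : finType) (G : rdata F E) (X : {set E}) : rdata F E :=
  RData (fun x => if edg G x \in X then sig G x else eps G x)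
        (fun x => if edg G x \in X then eps G x else sig G x)
        (nu G) (edg G).

From mathcomp Require Import all_boot.

(* Since eps and nu are fixed-point-free involutions, the flags can be
   2-coloured by some s so that both eps and nu change the colour, and in a
   bouquet a loop is orientable exactly when sig changes the colour as well.
   Twisting a certificate c by s, w := s (+) c, turns the conditions on c into:
   eps and sig both change w, and w is constant across at most four vertex
   arcs.  These conditions treat eps and sig symmetrically and do not involve
   the edge sets, so they survive partial duality, which only exchanges eps
   and sig on the flags of the dualised edges and leaves nu unchanged. *)

Set Implicit Arguments.
Unset Strict Implicit.
Unset Printing Implicit Defensive.

Definition alternating (T : Type) (f : T -> T) (s : T -> bool) :=
  forall x, s (f x) = ~~ s x.

Definition twisted_certificate (F E : finType) (G : rdata F E)
    (w : F -> bool) :=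
  [/\ alternating (eps G) w, alternating (sig G) w
    & #|[set x | w x == w (nu G x)]| <= 4].

Lemma pdual_twisted_certificate (F E : finType) (G : rdata F E) X w :
  twisted_certificate G w -> twisted_certificate (pdual G X) w.
Proof. by case=> w_eps w_sig w_card; split=> // x /=; case: ifP. Qed.

Lemma fpf_involutionK (F : finType) (f : F -> F) :
  fpf_involution f -> involutive f.
Proof. by move=> Hf x; case: (Hf x). Qed.

Lemma addb_alternatingE (a a' b b' : bool) :
  a' (+) b' = ~~ (a (+) b) <-> (b' = b <-> a' = ~~ a).
Proof.
case: a a' b b' => [] [] [] []; split=> // -[H1 H2];
  first [by move/(_ erefl): H1 | by move/(_ erefl): H2].
Qed.

Section Bicolouring.

Variables (F : finType) (a b : F -> F).
Hypotheses (a_fpf : fpf_involution a) (b_fpf : fpf_involution b).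

Let aK := fpf_involutionK a_fpf.
Let bK := fpf_involutionK b_fpf.
Let r x := b (a x).

(* [a] reverses the rotation [r]: [a (r y) = r^-1 (a y)], which lets an
   occurrence of [a x] at step [n + 2] of the orbit of [x] descend to step [n]
   of the orbit of [r x]. *)
Lemma iter_rot_neq n x : iter n r x <> a x.
Proof.
elim/ltn_ind: n x => [[_ x Hx | [_ x | n IH x Hx]]] /=.
- by case: (a_fpf x); rewrite -Hx.
- by case: (b_fpf (a x)).
apply: (IH n (ltnW (ltnSn _)) (r x)); rewrite -iterSr.
by rewrite /r -Hx [iter n.+2 _ _]iterS bK aK.
Qed.

Lemma exists_bicolouring : exists s, alternating a s /\ alternating b s.
Proof.
have rK : cancel r (fun x => a (b x)) by move=> x; rewrite /r bK aK.
have r_sym := fconnect_sym (can_inj rK).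
have root_a x : froot r x != froot r (a x).
  by apply/eqP => /(rootP r_sym) /iter_findex /iter_rot_neq.
pose s x := enum_rank (froot r x) < enum_rank (froot r (a x)).
have s_a : alternating a s.
  move=> x; rewrite /s aK ltn_neqAle -leqNgt.
  by rewrite (inj_eq val_inj) (inj_eq enum_rank_inj) eq_sym root_a.
exists s; split=> // x.
have root_b : froot r (b x) = froot r (a x).
  by apply/esym/(rootP r_sym); rewrite -{2}[x]aK; apply: fconnect1.
have root_ab : froot r (a (b x)) = froot r x.
  apply/(rootP r_sym).
  by rewrite {2}(_ : x = r (a (b x))) ?fconnect1 // /r aK bK.
by rewrite -s_a /s root_b root_ab aK.
Qed.

End Bicolouring.

Section RibbonGraph.

Variables (F E : finType) (G : rdata F E).
Hypothesis G_ribbon : is_ribbon_graph G.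

Lemma eps_fpf : fpf_involution (eps G).
Proof. by case: G_ribbon => -[]. Qed.

Lemma sig_fpf : fpf_involution (sig G).
Proof. by case: G_ribbon => -[]. Qed.

Lemma nu_fpf : fpf_involution (nu G).
Proof. by case: G_ribbon => -[]. Qed.

Let epsK := fpf_involutionK eps_fpf.
Let sigK := fpf_involutionK sig_fpf.

Lemma eps_sigC x : eps G (sig G x) = sig G (eps G x).
Proof. by case: G_ribbon => -[_ _ _ /(_ x) []]. Qed.

Lemma eps_neq_sig x : eps G x <> sig G x.
Proof. by case: G_ribbon => -[_ _ _ /(_ x) []]. Qed.

Lemma edg_flagP x y :
  edg G x = edg G y <-> y \in [:: x; eps G x; sig G x; eps G (sig G x)].
Proof. by case: G_ribbon => -[_ _ _ _]. Qed.

Lemma edg_eps x : edg G (eps G x) = edg G x.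
Proof. by apply/esym/edg_flagP; rewrite !inE eqxx orbT. Qed.

Lemma edg_sig x : edg G (sig G x) = edg G x.
Proof. by apply/esym/edg_flagP; rewrite !inE eqxx !orbT. Qed.

Lemma orientable_loopP (s : F -> bool) x :
  bouquet G -> alternating (eps G) s -> alternating (nu G) s ->
  orientable_loop G (edg G x) <-> s (sig G x) = ~~ s x.
Proof.
move=> [_ G_conn] s_eps s_nu; split=> [[t t_alt] | s_sig].
  have st_const : closed (vrel G) [pred z | s z (+) t z].
    move=> y z /orP[] /eqP -> /=; have [t_eps t_nu _] := t_alt y; rewrite !inE.
      by rewrite s_eps t_eps addbN addNb negbK.
    by rewrite s_nu t_nu addbN addNb negbK.
  have := closed_connect st_const (G_conn x (sig G x)); rewrite !inE.
  have [_ _ -> //] := t_alt x.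
  by case: (s x) (t x) (s (sig G x)) => [] [] [].
exists s => y; split=> // /esym /edg_flagP; rewrite !inE => /or4P[] /eqP ->.
- exact: s_sig.
- by rewrite -eps_sigC !s_eps s_sig.
- by rewrite sigK s_sig negbK.
- by rewrite -eps_sigC sigK !s_eps s_sig negbK.
Qed.

Lemma pdual_ribbon_graph X : is_ribbon_graph (pdual G X).
Proof.
split; last by case: G_ribbon.
split=> [x|x|//|x|x y] /=; first [exact: nu_fpf | case xX: (edg G x \in X)];
  rewrite ?edg_sig ?edg_eps ?xX.
- exact: sig_fpf.
- exact: eps_fpf.
- exact: eps_fpf.
- exact: sig_fpf.
- by split; [rewrite eps_sigC | move/esym/eps_neq_sig].
- by split; [rewrite eps_sigC | apply: eps_neq_sig].
- apply: (iff_trans (edg_flagP x y)); rewrite !inE -eps_sigC.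
  by split=> /or4P[] ->; rewrite ?orbT.
- exact: edg_flagP.
Qed.

Section Twist.

Hypothesis G_bouquet : bouquet G.
Variables s c w : F -> bool.
Hypotheses (s_eps : alternating (eps G) s) (s_nu : alternating (nu G) s).
Hypothesis w_def : forall x, w x = s x (+) c x.

Lemma certificate_twistE :
  [/\ (forall x, c (eps G x) = c x), #|[set x | c x != c (nu G x)]| <= 4
    & forall x, c (sig G x) = c x <-> orientable_loop G (edg G x)]
  <-> twisted_certificate G w.
Proof.
have twistP f x : w (f x) = ~~ w x <-> (c (f x) = c x <-> s (f x) = ~~ s x).
  by rewrite !w_def; apply: addb_alternatingE.
have orientableP x := orientable_loopP x G_bouquet s_eps s_nu.
have -> : [set x | c x != c (nu G x)] = [set x | w x == w (nu G x)].
  apply/setP=> x; rewrite !inE !w_def s_nu.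
  by case: (s x) (c x) (c (nu G x)) => [] [] [].
split=> [[c_eps c_card c_sig] | [w_eps w_sig w_card]]; split=> // x.
- by apply/twistP; rewrite c_eps s_eps.
- exact/twistP/(iff_trans (c_sig x) (orientableP x)).
- by have /twistP := w_eps x; rewrite s_eps => -[_ ->].
- exact: iff_trans ((twistP _ x).1 (w_sig x)) (iff_sym (orientableP x)).
Qed.

End Twist.

Lemma has_certificateE :
  bouquet G -> has_certificate G <-> exists w, twisted_certificate G w.
Proof.
move=> G_bouquet; have [s [s_eps s_nu]] := exists_bicolouring eps_fpf nu_fpf.
have twistE := certificate_twistE G_bouquet s_eps s_nu.
split=> [[c c_cert] | [w w_twist]].
  by exists (fun x => s x (+) c x); apply/(twistE c).
by exists (fun x => s x (+) w x); apply/(twistE _ w) => // x; rewrite addKb.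
Qed.

End RibbonGraph.

Theorem lemma3p10 (F E : finType) (G : rdata F E) :
  is_ribbon_graph G -> bouquet G -> has_certificate G ->
  forall X : {set E}, bouquet (pdual G X) -> has_certificate (pdual G X).
Proof.
move=> G_ribbon G_bouquet G_cert X dual_bouquet.
have [w w_twist] := (has_certificateE G_ribbon G_bouquet).1 G_cert.
apply/(has_certificateE (pdual_ribbon_graph G_ribbon X) dual_bouquet).
by exists w; apply: pdual_twisted_certificate.
Qed.
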